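(* Let $(P,\leqslant)$ be a conditionally-complete interpolating poset and let $P^* := \{x \in P : \exists\, y \in P,\ y \ll x\}$ with the induced order. Then $P^*$ is a conditionally-complete interpolating subposet of $P$.
   Context: A poset is conditionally-complete if every nonempty subset bounded above has a supremum. A nonempty subset $D$ is directed if any two elements of $D$ have an upper bound in $D$. For a poset $R$ and $x,y \in R$, $x \ll_R y$ means: for every directed subset $D$ of $R$ bounded above in $R$ with supremum $d_0$ in $R$, $y \leqslant d_0$ implies $x \leqslant d$ for some $d \in D$; write $\ll$ for $\ll_P$. A poset $R$ is interpolating if whenever $x \ll_R y$ there is $z \in R$ with $x \ll_R z \ll_R y$. A subset $Q \subseteq P$ with the induced order is a subposet of $P$ if for all $x,y \in Q$: $x \ll_Q y \iff x \ll y$. *)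

Definition is_poset {T : Type} (le : T -> T -> Prop) : Prop :=
  (forall x, le x x) /\
  (forall x y, le x y -> le y x -> x = y) /\
  (forall x y z, le x y -> le y z -> le x z).

Definition upper_bound {T : Type} (le : T -> T -> Prop) (S : T -> Prop) (u : T) : Prop :=
  forall s, S s -> le s u.

Definition is_sup_in {T : Type} (le : T -> T -> Prop) (R S : T -> Prop) (s : T) : Prop :=
  R s /\ upper_bound le S s /\ (forall u, R u -> upper_bound le S u -> le s u).

Definition cond_complete {T : Type} (le : T -> T -> Prop) (R : T -> Prop) : Prop :=
  forall S : T -> Prop, (forall x, S x -> R x) -> (exists x, S x) ->
    (exists u, R u /\ upper_bound le S u) -> exists s, is_sup_in le R S s.

Definition directed {T : Type} (le : T -> T -> Prop) (D : T -> Prop) : Prop :=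
  (exists d, D d) /\
  (forall a b, D a -> D b -> exists c, D c /\ le a c /\ le b c).

Definition way_below_in {T : Type} (le : T -> T -> Prop) (R : T -> Prop) (x y : T) : Prop :=
  forall (D : T -> Prop) (d0 : T),
    (forall d, D d -> R d) -> directed le D ->
    (exists u, R u /\ upper_bound le D u) ->
    is_sup_in le R D d0 -> le y d0 -> exists d, D d /\ le x d.

Definition setT {T : Type} : T -> Prop := fun _ => True.

Definition interpolating {T : Type} (le : T -> T -> Prop) (R : T -> Prop) : Prop :=
  forall x y, R x -> R y -> way_below_in le R x y ->
    exists z, R z /\ way_below_in le R x z /\ way_below_in le R z y.

Definition subposet {T : Type} (le : T -> T -> Prop) (Q : T -> Prop) : Prop :=
  forall x y, Q x -> Q y -> (way_below_in le Q x y <-> way_below_in le setT x y).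


(* P* is upward closed, and in a conditionally complete poset suprema of
   subsets of an upward-closed set are the same whether computed in P or in
   the subset; this gives completeness of P* and [x << y -> x <<_{P*} y].
   For the converse, given y in P* interpolate [w << z << y]: any directed D
   with supremum above y has an element above z, which lies in P*, so the
   elements of D in P* form a cofinal directed subset with the same supremum,
   to which [x <<_{P*} y] applies. *)

Section WayBelowSubposet.
Context {T : Type} (le : T -> T -> Prop).
Hypothesis le_trans : forall x y z, le x y -> le y z -> le x z.

Definition upclosed (Q : T -> Prop) : Prop := forall x y, Q x -> le x y -> Q y.

Definition Pstar : T -> Prop := fun x => exists y, way_below_in le setT y x.

Lemma way_below_le_r (R : T -> Prop) x y y' :
  way_below_in le R x y -> le y y' -> way_below_in le R x y'.
Proof.
  intros Hxy Hyy' D d0 HD Hdir Hbnd Hsup Hy'.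
  apply (Hxy D d0); auto. eapply le_trans; eauto.
Qed.

Lemma upclosed_Pstar : upclosed Pstar.
Proof. intros x x' [y Hyx] Hxx'. exists y. eapply way_below_le_r; eauto. Qed.

Lemma is_sup_in_upclosed (Q S : T -> Prop) s :
  upclosed Q -> (exists x, S x /\ Q x) -> is_sup_in le setT S s ->
  is_sup_in le Q S s.
Proof.
  intros HQ [x [Sx Qx]] [_ [Hub Hleast]].
  split; [apply (HQ x); auto | split; auto].
  intros u _ Hu. apply Hleast; [exact I | exact Hu].
Qed.

Lemma is_sup_in_cofinal (R D D' : T -> Prop) s :
  (forall d, D' d -> D d) -> (forall d, D d -> exists e, D' e /\ le d e) ->
  is_sup_in le R D s -> is_sup_in le R D' s.
Proof.
  intros Hsub Hcof [Rs [Hub Hleast]].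
  split; [exact Rs | split; [intros d Dd; auto |]].
  intros u Ru Hu. apply Hleast; auto.
  intros d Dd. destruct (Hcof d Dd) as [e [D'e Hde]]. eapply le_trans; eauto.
Qed.

Lemma directed_upclosed_restrict (Q D : T -> Prop) d1 :
  upclosed Q -> directed le D -> D d1 -> Q d1 ->
  directed le (fun e => D e /\ Q e) /\
  (forall d, D d -> exists e, (D e /\ Q e) /\ le d e).
Proof.
  intros HQ [_ Hdir] Dd1 Qd1.
  assert (Hcof : forall d, D d -> exists e, (D e /\ Q e) /\ le d e).
  { intros d Dd. destruct (Hdir d d1 Dd Dd1) as [c [Dc [Hdc Hd1c]]].
    exists c. split; [split; [exact Dc | apply (HQ d1); auto] | exact Hdc]. }
  split; [split | exact Hcof].
  - exists d1. auto.
  - intros a b [Da Qa] [Db _]. destruct (Hdir a b Da Db) as [c [Dc [Hac Hbc]]].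
    exists c. split; [split; [exact Dc | apply (HQ a); auto] | auto].
Qed.

Hypothesis le_complete : cond_complete le setT.

Lemma is_sup_in_setT_of_upclosed (Q S : T -> Prop) s :
  upclosed Q -> (exists x, S x /\ Q x) -> is_sup_in le Q S s ->
  is_sup_in le setT S s.
Proof.
  intros HQ [x [Sx Qx]] [Qs [Hub Hleast]].
  destruct (le_complete S (fun _ _ => I) (ex_intro _ x Sx)
              (ex_intro _ s (conj I Hub))) as [s' [_ [Hub' Hleast']]].
  assert (Qs' : Q s') by (apply (HQ x); auto).
  split; [exact I | split; [exact Hub |]].
  intros u _ Hu. apply le_trans with s'; [apply Hleast; auto | apply Hleast'; auto; exact I].
Qed.

Lemma cond_complete_upclosed (Q : T -> Prop) : upclosed Q -> cond_complete le Q.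
Proof.
  intros HQ S HSQ [x Sx] [u [_ Hu]].
  destruct (le_complete S (fun _ _ => I) (ex_intro _ x Sx)
              (ex_intro _ u (conj I Hu))) as [s Hs].
  exists s. apply is_sup_in_upclosed; eauto.
Qed.

Lemma way_below_upclosed (Q : T -> Prop) x y :
  upclosed Q -> way_below_in le setT x y -> way_below_in le Q x y.
Proof.
  intros HQ Hxy D d0 HDQ Hdir [u [_ Hu]] Hsup Hy.
  destruct Hdir as [[d Dd] Hdir'].
  apply (Hxy D d0); auto.
  - intros; exact I.
  - split; [exists d |]; auto.
  - exists u. split; [exact I | exact Hu].
  - apply is_sup_in_setT_of_upclosed with Q; eauto.
Qed.

Hypothesis le_interpolating : interpolating le setT.

Lemma way_below_of_Pstar x y :
  Pstar y -> way_below_in le Pstar x y -> way_below_in le setT x y.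
Proof.
  intros [w Hwy] Hxy D d0 _ Hdir Hbnd Hsup Hy.
  destruct (le_interpolating w y I I Hwy) as [z [_ [Hwz Hzy]]].
  destruct (Hzy D d0 (fun _ _ => I) Hdir Hbnd Hsup Hy) as [d1 [Dd1 Hzd1]].
  assert (Pd1 : Pstar d1) by (exists w; eapply way_below_le_r; eauto).
  destruct (directed_upclosed_restrict Pstar D d1 upclosed_Pstar Hdir Dd1 Pd1)
    as [Hdir' Hcof].
  assert (Hsup' : is_sup_in le Pstar (fun e => D e /\ Pstar e) d0).
  { apply is_sup_in_upclosed; [exact upclosed_Pstar | exists d1; auto |].
    eapply is_sup_in_cofinal; [intros e [De _]; exact De | exact Hcof | exact Hsup]. }
  assert (Hbnd' : exists u, Pstar u /\ upper_bound le (fun e => D e /\ Pstar e) u).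
  { exists d0. split; apply Hsup'. }
  destruct (Hxy _ d0 (fun e He => proj2 He) Hdir' Hbnd' Hsup' Hy)
    as [d [[Dd _] Hxd]].
  exists d. split; assumption.
Qed.

End WayBelowSubposet.

Theorem corollary2p5 (T : Type) (le : T -> T -> Prop) :
  is_poset le -> cond_complete le setT -> interpolating le setT ->
  let Pstar : T -> Prop := fun x => exists y, way_below_in le setT y x in
  cond_complete le Pstar /\ interpolating le Pstar /\ subposet le Pstar.
Proof.
  intros [_ [_ Htrans]] Hc Hi P.
  change P with (Pstar le).
  pose proof (upclosed_Pstar le Htrans) as Hup.
  split; [| split].
  - exact (cond_complete_upclosed le Hc _ Hup).
  - intros x y _ Py Hxy.
    apply (way_below_of_Pstar le Htrans Hi x y Py) in Hxy.
    destruct (Hi x y I I Hxy) as [z [_ [Hxz Hzy]]].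
    exists z. split; [exists x; exact Hxz |].
    split; apply (way_below_upclosed le Htrans Hc); auto.
  - intros x y _ Py. split.
    + exact (way_below_of_Pstar le Htrans Hi x y Py).
    + exact (way_below_upclosed le Htrans Hc _ x y Hup).
Qed.
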